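(* If $X$ is an (infinite) $T_1$-space, then $\psi(X)\le nu(X)\cdot 2^{s(X)}$.
   Context: A non-empty subset $A$ of a space $X$ is called finitely non-Urysohn if for every non-empty finite subset $F\subseteq A$ and every family $\{U_x:x\in F\}$ where each $U_x$ is an open neighborhood of $x$, we have $\bigcap_{x\in F}\overline{U_x}\neq\emptyset$. The non-Urysohn number is $nu(X):=1+\sup\{|A|:A\subseteq X$ finitely non-Urysohn$\}$. $s(X)$ denotes the spread of $X$ (supremum of cardinalities of discrete subspaces, plus $\omega$) and $\psi(X)$ the pseudocharacter. Throughout, ''space'' means infinite topological space. *)

From HB Require Import structures.
From mathcomp Require Import all_boot all_order.
From mathcomp Require Import all_classical all_reals all_analysis.
Set Implicit Arguments. Unset Strict Implicit. Unset Printing Implicit Defensive.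
Local Open Scope classical_set_scope.
Local Open Scope card_scope.

Section defs.
Variable X : topologicalType.

Definition finitely_non_urysohn (A : set X) : Prop :=
  A !=set0 /\
  forall F : set X, finite_set F -> F !=set0 -> F `<=` A ->
    forall U : X -> set X, (forall x, F x -> open (U x) /\ U x x) ->
      (\bigcap_(x in F) closure (U x)) !=set0.

(* nu_le N  <->  nu(X) = 1 + sup{|A| : A fin. non-Urysohn} <= |N|.
   (1 + |A| is the cardinality of A plus one new point, realized in option X.) *)
Definition nu_le (N : Type) : Prop :=
  forall A : set X, finitely_non_urysohn A ->
    ((Some @` A) `|` [set None]) #<= [set: N].

Definition discrete_subspace (D : set X) : Prop :=
  forall d, D d -> exists U : set X, open U /\ U `&` D = [set d].

(* s_le S  <->  s(X) = omega + sup{|D| : D discrete} <= |S| *)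
Definition s_le (S : Type) : Prop :=
  infinite_set [set: S] /\
  forall D : set X, discrete_subspace D -> D #<= [set: S].

(* psi_le K  <->  psi(X) = omega + sup_x psi(x,X) <= |K|, where psi(x,X) is the
   least cardinality of a family of open sets whose intersection is {x}. *)
Definition psi_le (K : Type) : Prop :=
  infinite_set [set: K] /\
  forall x : X, exists F : set (set X),
    F #<= [set: K] /\ (forall U, F U -> open U /\ U x) /\
    \bigcap_(U in F) U = [set x].

End defs.

From HB Require Import structures.
From mathcomp Require Import all_boot all_order.
From mathcomp Require Import all_classical all_reals all_analysis.
Set Implicit Arguments. Unset Strict Implicit. Unset Printing Implicit Defensive.
Local Open Scope classical_set_scope.
Local Open Scope card_scope.

(* Fix x and let K be the theta-closure of {x}: the points y lying in the
   closure of every open neighbourhood of x.  K is finitely non-Urysohn, so an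
   injection of K into N separates the points of K \ {x} from x by the closed
   fibres of size at most one (T1).  Every y outside K has an open
   neighbourhood W y whose closure misses some neighbourhood of x, and
   Shapirovskii's lemma yields a discrete D, hence of size at most |S|, with
   every such y in the closure of D or in some W d, d in D.  In both cases y is
   separated from x by the complement of the closure of a set determined by a
   subset of D, i.e. by an element of S -> bool. *)

Lemma inj_card_leT T U (A : set T) (f : T -> U) :
  {in A &, injective f} -> A #<= [set: U].
Proof.
move=> f_inj; apply: (@card_le_trans _ _ _ (f @` A)); last exact: card_leT.
by have /card_eqPle[] := inj_card_eq f_inj.
Qed.

Lemma card_leT_inhabited T U (A : set T) :
  A !=set0 -> A #<= [set: U] -> inhabited U.
Proof.
move=> [a Aa] AU; have [//|noU] := pselect (inhabited U); exfalso.
suff A0 : A = set0 by rewrite A0 in Aa.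
have U0 : [set: U] = set0 by apply/seteqP; split => // u; case: noU.
by rewrite U0 in AU; move/card_le0P: AU.
Qed.

Lemma card_leT_inj T U (A : set T) :
  inhabited U -> A #<= [set: U] -> exists f : T -> U, {in A &, injective f}.
Proof.
case; elim/Ppointed: U => U u0; first by case: (no u0).
by move/pcard_injP.
Qed.

Lemma infinite_prod_fun_bool N S : inhabited N -> infinite_set [set: S] ->
  infinite_set [set: N * (S -> bool)].
Proof.
move=> [n0] /infiniteP Sinf; apply/infiniteP; apply: card_le_trans Sinf _.
apply: (@inj_card_leT _ _ _ (fun s => (n0, fun t => `[< t = s >]))).
move=> s t _ _ [] /(congr1 (@^~ s)) /= st.
by apply/asboolP; rewrite -st; apply/asboolP.
Qed.

Lemma closure_openP (X : topologicalType) (A : set X) p :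
  closure A p <-> forall U, open U -> U p -> A `&` U !=set0.
Proof.
split=> [clA U oU Up|AU B]; first by apply: clA; apply: open_nbhs_nbhs.
rewrite nbhsE => -[V [oV Vp] VB].
by have [z [Az Vz]] := AU V oV Vp; exists z; split => //; apply: VB.
Qed.

Section Shapirovskii.
Context {X : topologicalType}.
Variables (Y : set X) (W : X -> set X).
Hypothesis W_nbhs : forall y, Y y -> open (W y) /\ W y y.

Definition W_separated (D : set X) := D `<=` Y /\
  forall d, D d -> exists2 V, open V & V d /\
    forall z, D z -> V z -> W d z -> z = d.

(* New points avoid the W-neighbourhoods of old ones, so separation witnesses
   survive along chains. *)
Definition end_extension (D D' : set X) := D `<=` D' /\
  forall y, D' y -> ~ D y -> forall d, D d -> ~ W d y.

Lemma end_extension_trans D1 D2 D3 :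
  end_extension D1 D2 -> end_extension D2 D3 -> end_extension D1 D3.
Proof.
move=> [s12 n12] [s23 n23]; split=> [z /s12/s23 //|y D3y nD1y d D1d].
have [D2y|nD2y] := pselect (D2 y); first exact: n12.
exact: n23 (s12 _ D1d).
Qed.

Lemma separated_discrete D : W_separated D -> discrete_subspace D.
Proof.
move=> [DY Dsep] d Dd; have [V oV [Vd V_sep]] := Dsep d Dd.
have [oW Wd] := W_nbhs (DY d Dd).
exists (V `&` W d); split; first exact: openI.
by apply/seteqP; split=> [z [[Vz Wz] Dz]|z ->]; [exact: V_sep|].
Qed.

Section Chains.
Variables (I : Type) (A : set I) (F : I -> set X).
Hypotheses (A_sep : forall i, A i -> W_separated (F i))
  (A_chain : total_on A (fun i j => end_extension (F i) (F j))).

Lemma end_extension_bigcup i : A i -> end_extension (F i) (\bigcup_(j in A) F j).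
Proof.
move=> Ai; split=> [z Fiz|y [j Aj Fjy] nFiy d Fid]; first by exists i.
have [[_ ij_new]|[ji _]] := A_chain Ai Aj; first exact: ij_new.
by case: nFiy; apply: ji.
Qed.

Lemma separated_bigcup : W_separated (\bigcup_(i in A) F i).
Proof.
split=> [z [i /A_sep[FY _] /FY //]|d [i Ai Fid]].
have [_ /(_ d Fid) [V oV [Vd V_sep]]] := A_sep Ai.
exists V => //; split=> // z [j Aj Fjz] Vz Wdz.
have [[_ ij_new]|[ji _]] := A_chain Ai Aj; last exact: V_sep (ji _ Fjz) _ _.
have [Fiz|nFiz] := pselect (F i z); first exact: V_sep.
by case: (ij_new z Fjz nFiz d Fid).
Qed.

End Chains.

Lemma separated_setU1 D y : W_separated D -> Y y -> ~ closure D y ->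
  (forall d, D d -> ~ W d y) -> W_separated (D `|` [set y]).
Proof.
move=> [DY Dsep] Yy /closure_openP /existsNP [B] /not_implyP [oB] /not_implyP [By].
move=> /set0P/negP; rewrite negbK => /eqP DB0 nW.
split=> [z [/DY //|-> //]|d [Dd|->]].
  have [V oV [Vd V_sep]] := Dsep d Dd.
  by exists V => //; split=> // z [Dz|->] Vz Wdz; [exact: V_sep|case: (nW d)].
exists B => //; split=> // z [Dz|->] // Bz _.
by have : (D `&` B) z by []; rewrite DB0.
Qed.

Lemma maximal_separated : exists2 D, W_separated D &
  forall D', W_separated D' -> end_extension D D' -> D' = D.
Proof.
pose T := {D : set X | W_separated D}.
pose R (s t : T) := `[< end_extension (sval s) (sval t) >].
suff [[D Dsep] Dmax] : exists t : T, forall s, R t s -> s = t.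
  exists D => // D' D'sep DD'.
  by have /(congr1 sval) := Dmax (exist _ D' D'sep) (asboolT DD').
apply: Zorn.
- by move=> t; apply/asboolP; split=> // y ? ?.
- by move=> r s t /asboolP rs /asboolP st; apply/asboolP; apply: end_extension_trans st.
- move=> [D Dsep] [E Esep] /asboolP [DE _] /asboolP [ED _].
  by apply: eq_exist; apply/seteqP.
move=> A A_chain.
have chain : total_on A (fun s t => end_extension (sval s) (sval t)).
  by move=> s t As At; have [/asboolP|/asboolP] := A_chain s t As At; [left|right].
have Asep t : A t -> W_separated (sval t) by case: t.
exists (exist _ _ (separated_bigcup Asep chain)) => t At.
exact/asboolP/end_extension_bigcup.
Qed.

Theorem shapirovskii : exists D, D `<=` Y /\ discrete_subspace D /\
  forall y, Y y -> closure D y \/ exists2 d, D d & W d y.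
Proof.
have [D Dsep Dmax] := maximal_separated; have [DY _] := Dsep.
exists D; split=> //; split=> [|y Yy]; first exact: separated_discrete.
have [|nclDy] := pselect (closure D y); first by left.
have [|nWy] := pselect (exists2 d, D d & W d y); first by right.
have nW d : D d -> ~ W d y by move=> Dd Wdy; apply: nWy; exists d.
have D'sep := separated_setU1 Dsep Yy nclDy nW.
have DD' : end_extension D (D `|` [set y]).
  by split=> [z|z [//|->] _]; [left|].
case: nclDy; apply: subset_closure.
by rewrite -(Dmax _ D'sep DD'); right.
Qed.

End Shapirovskii.

Section ThetaClosure.
Context {X : topologicalType}.

Definition theta_closure1 (x : X) := [set y | forall U, open U -> U x -> closure U y].

Lemma theta_closure1_non_urysohn x : finitely_non_urysohn (theta_closure1 x).
Proof.
split=> [|F _ _ FK U U_nbhs]; first by exists x => U _ Ux; apply: subset_closure.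
exists x => z Fz; have [oU Uz] := U_nbhs z Fz.
apply/closure_openP => V oV Vx.
have [w [Vw Uw]] := (closure_openP _ _).1 (FK z Fz V oV Vx) (U z) oU Uz.
by exists w.
Qed.

Lemma theta_closure1_sep x : exists U : X -> set X, forall y,
  ~ theta_closure1 x y -> open (U y) /\ U y x /\ ~ closure (U y) y.
Proof.
suff /choice[U U_sep] : forall y, exists U : set X,
  ~ theta_closure1 x y -> open U /\ U x /\ ~ closure U y by exists U.
move=> y; have [Ky|/existsNP [U /not_implyP [oU /not_implyP [Ux nclU]]]] :=
  pselect (theta_closure1 x y); first by exists setT.
by exists U.
Qed.

(* The fallback [setT] makes the family total; it is never used to exclude a point. *)
Definition avoid_closure (x : X) (A : set X) : set X :=
  if pselect (closure A x) then setT else ~` closure A.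

Lemma avoid_closure_open_nbhs x A : open (avoid_closure x A) /\ avoid_closure x A x.
Proof.
rewrite /avoid_closure; case: pselect => clAx; split=> //; first exact: openT.
by rewrite openC; apply: closed_closure.
Qed.

Lemma avoid_closureN x A y : ~ closure A x -> closure A y -> ~ avoid_closure x A y.
Proof. by move=> nclAx clAy; rewrite /avoid_closure; case: pselect => [|_ []]. Qed.

Lemma subsingleton_closed : accessible_space X ->
  forall A : set X, (forall y z, A y -> A z -> y = z) -> closed A.
Proof.
move=> T1 A A1; have [[y Ay]|/set0P/negP] := pselect (A !=set0).
  suff -> : A = [set y] by apply: accessible_closed_set1.
  by apply/seteqP; split=> [z Az|z ->//]; apply: A1.
by rewrite negbK => /eqP ->; apply: closed0.
Qed.

End ThetaClosure.

Section PseudoCharacter.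
Context {X : topologicalType}.
Hypothesis T1 : accessible_space X.
Context {x : X} {U : X -> set X}.
Hypothesis U_sep : forall y, ~ theta_closure1 x y ->
  open (U y) /\ U y x /\ ~ closure (U y) y.

Let W y := ~` closure (U y).

Lemma open_nbhs_compl_closure y : ~ theta_closure1 x y -> open (W y) /\ W y y.
Proof.
by move=> /U_sep[_ [_ nclUy]]; split=> //; rewrite /W openC; apply: closed_closure.
Qed.

Lemma not_closure_subset_compl_closure y B :
  ~ theta_closure1 x y -> B `<=` W y -> ~ closure B x.
Proof.
move=> /U_sep[oU [Ux _]] BW /closure_openP /(_ _ oU Ux) [z [Bz Uz]].
by apply: (BW z Bz); apply: subset_closure.
Qed.

Context {N S : Type} {D : set X} {io : X -> N} {iD : X -> S}.
Hypotheses (D_sub : D `<=` ~` theta_closure1 x)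
  (D_cov : forall y, ~ theta_closure1 x y ->
     closure D y \/ exists2 d, D d & W d y)
  (io_inj : {in theta_closure1 x &, injective io})
  (iD_inj : {in D &, injective iD}).

Definition code_fiber n := [set y | y <> x /\ theta_closure1 x y /\ io y = n].

Definition coded_part (f : S -> bool) := [set d | D d /\ f (iD d)].

Definition psi_nbhs (p : N * (S -> bool)) :=
  ~` code_fiber p.1 `&` avoid_closure x (coded_part p.2)
  `&` avoid_closure x (\bigcup_(d in coded_part p.2) W d).

Lemma psi_nbhs_open_nbhs p : open (psi_nbhs p) /\ psi_nbhs p x.
Proof.
have [oB Bx] := avoid_closure_open_nbhs x (coded_part p.2).
have [oC Cx] := avoid_closure_open_nbhs x (\bigcup_(d in coded_part p.2) W d).
split; last by split=> //; split=> // -[].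
apply: openI => //; apply: openI => //; rewrite openC.
apply: subsingleton_closed => // y z [_ [Ky <-]] [_ [Kz /esym yz]].
by apply: io_inj; rewrite ?inE.
Qed.

Lemma psi_nbhs_theta y f : y <> x -> theta_closure1 x y -> ~ psi_nbhs (io y, f) y.
Proof. by move=> yx Ky [[nfib _] _]; apply: nfib. Qed.

Lemma psi_nbhs_closure y : ~ theta_closure1 x y -> closure D y ->
  exists p, ~ psi_nbhs p y.
Proof.
move=> nKy clDy.
pose f s := `[< exists2 d, (D `&` W y) d & iD d = s >].
have fW : coded_part f `<=` W y.
  move=> d [Dd /asboolP [d' [Dd' Wd'] d'd]].
  by rewrite -(iD_inj _ _ d'd) ?inE.
have cl_f : closure (coded_part f) y.
  apply/closure_openP => V oV Vy.
  have [oW Wy] := open_nbhs_compl_closure nKy.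
  have [z [Dz [Vz Wz]]] := (closure_openP _ _).1 clDy _ (openI oV oW) (conj Vy Wy).
  by exists z; split=> //; split=> //; apply/asboolP; exists z.
exists (io y, f) => -[[_ avoid_y] _].
exact: avoid_closureN (not_closure_subset_compl_closure nKy fW) cl_f avoid_y.
Qed.

Lemma psi_nbhs_compl_closure y d : D d -> W d y -> exists p, ~ psi_nbhs p y.
Proof.
move=> Dd Wdy; pose f s := `[< s = iD d >].
have Cf : \bigcup_(e in coded_part f) W e `<=` W d.
  by move=> z [e [De /asboolP ed] Wez]; rewrite -(iD_inj _ _ ed) ?inE.
have clCy : closure (\bigcup_(e in coded_part f) W e) y.
  by apply: subset_closure; exists d => //; split=> //; apply/asboolP.
exists (io y, f) => -[_ avoid_y].
exact: avoid_closureN (not_closure_subset_compl_closure (D_sub Dd) Cf) clCy avoid_y.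
Qed.

Lemma bigcap_psi_nbhs : \bigcap_(p in [set: N * (S -> bool)]) psi_nbhs p = [set x].
Proof.
apply/seteqP; split=> [y psi_y|_ -> p _]; last by case: (psi_nbhs_open_nbhs p).
apply: contrapT => yx.
have [Ky|nKy] := pselect (theta_closure1 x y).
  exact: psi_nbhs_theta (fun _ => false) yx Ky (psi_y _ I).
have [clDy|[d Dd Wdy]] := D_cov nKy.
  by have [p] := psi_nbhs_closure nKy clDy; apply; apply: psi_y.
by have [p] := psi_nbhs_compl_closure Dd Wdy; apply; apply: psi_y.
Qed.

Lemma pseudocharacter_le : exists F : set (set X),
  F #<= [set: N * (S -> bool)] /\ (forall V, F V -> open V /\ V x) /\
  \bigcap_(V in F) V = [set x].
Proof.
exists (psi_nbhs @` setT); split; first exact: card_image_le.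
split=> [_ [p _ <-]|]; first exact: psi_nbhs_open_nbhs.
rewrite -bigcap_psi_nbhs; apply/seteqP; split=> y Fy.
  by move=> p _; apply: Fy; exists p.
by move=> _ [p _ <-]; apply: Fy.
Qed.

End PseudoCharacter.

Lemma nu_le_inj (X : topologicalType) N (A : set X) : nu_le X N ->
  finitely_non_urysohn A -> exists f : X -> N, {in A &, injective f}.
Proof.
move=> nuN A_nu; have AN := nuN A A_nu.
have [|f f_inj] := card_leT_inj _ AN.
  by apply: card_leT_inhabited AN; exists None; right.
exists (f \o Some) => y z; rewrite !inE => Ay Az fyz.
suff [] : Some y = Some z by [].
by apply: f_inj; rewrite ?inE //; left; [exists y|exists z].
Qed.

Theorem corollary3p10 (X : topologicalType) :
  @accessible_space X -> infinite_set [set: X] ->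
  forall (N S : Type), nu_le X N -> s_le X S -> psi_le X (N * (S -> bool)).
Proof.
move=> T1 Xinf N S nuN [Sinf sS]; split.
  apply: infinite_prod_fun_bool Sinf.
  have [x0 _] := infinite_setN0 Xinf.
  by have [io _] := nu_le_inj nuN (theta_closure1_non_urysohn x0); exact: inhabits (io x0).
move=> x.
have [U U_sep] := theta_closure1_sep x.
have [D [D_sub [D_disc D_cov]]] := shapirovskii (open_nbhs_compl_closure U_sep).
have [io io_inj] := nu_le_inj nuN (theta_closure1_non_urysohn x).
have [|iD iD_inj] := card_leT_inj _ (sS D D_disc).
  by have [s0 _] := infinite_setN0 Sinf.
exact (pseudocharacter_le T1 U_sep D_sub D_cov io_inj iD_inj).
Qed.
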